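(* Algorithm 1 (as described in the context) is a decision procedure for DQBF: on every input DQBF $\Phi$ it terminates, and it returns TRUE if $\Phi$ is true and FALSE if $\Phi$ is false, for every admissible choice made during the run.
   Context: For a set $V$ of variables, $[V]$ is the set of assignments $V\to\{\textsc{true},\textsc{false}\}$; assignments are identified with terms of the literals they make true, $\neg\sigma$ is the clause of the negations of these literals, and $\sigma|_W$ denotes restriction. A DQBF is $\Phi=\forall u_1\ldots\forall u_n\exists e_1(D_1)\ldots\exists e_m(D_m).\varphi$ with pairwise distinct variables, $U=\{u_i\}$, $E=\{e_j\}$, dependency sets $D(e_j)=D_j\subseteq U$, $\varphi$ a CNF over $U\cup E$; a model is a family $(f_e)_{e\in E}$, $f_e:[D(e)]\to\{\textsc{true},\textsc{false}\}$, such that for all $\sigma\in[U]$ the assignment $\sigma$ together with $e\mapsto f_e(\sigma|_{D(e)})$ satisfies $\varphi$; $\Phi$ is true iff it has a model, false otherwise. A definition of a variable $x$ by a set $X$ in a formula $\chi$ is a formula $\psi$ with $\mathit{var}(\psi)\subseteq X$ such that every satisfying assignment $\lambda$ of $\chi$ has $\lambda(x)=\psi[\lambda]$. Arbiter variables $e^\sigma$ ($e\in E$, $\sigma\in[D(e)]$) are fresh variables. Algorithm 1. Phase 1: set $A=\emptyset$, $\varphi_A=\emptyset$, $\psi_{\mathit{Def}}=$ empty conjunction. For $i=1,\dots,m$: while $e_i$ has no definition by $A\cup D_i$ in $\varphi\wedge\varphi_A$, choose $\xi\in[D_i\cup A]$ such that both $\varphi\wedge\varphi_A\wedge\xi\wedge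 e_i$ and $\varphi\wedge\varphi_A\wedge\xi\wedge\neg e_i$ are satisfiable, let $\sigma=\xi|_{D_i}$, add $e_i^\sigma$ to $A$ and the clauses $(e_i^\sigma\vee\neg\sigma\vee\neg e_i)$, $(\neg e_i^\sigma\vee\neg\sigma\vee e_i)$ to $\varphi_A$. Then choose a definition $\psi^i$ of $e_i$ by $A\cup D_i$ in $\varphi\wedge\varphi_A$ and conjoin $(e_i\leftrightarrow\psi^i)$ to $\psi_{\mathit{Def}}$. Phase 2: let $\tau\in[A]$ set all arbiter variables true, $\mathcal{C}=\emptyset$. Repeat: if $\neg\varphi\wedge\psi_{\mathit{Def}}\wedge\tau$ is unsatisfiable, return TRUE; otherwise choose a satisfying assignment $\sigma$ of it, choose a subset $\rho$ of the literals of $\tau\wedge\sigma|_U$ with $\varphi\wedge\varphi_A\wedge\rho$ unsatisfiable, add the clause $\neg(\rho|_A)$ to $\mathcal{C}$; if $\mathcal{C}$ is satisfiable, let $\tau\in[A]$ satisfy $\mathcal{C}$ and repeat, else return FALSE. *)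

From mathcomp Require Import all_boot.
Set Implicit Arguments. Unset Strict Implicit. Unset Printing Implicit Defensive.

Inductive form (V : Type) : Type :=
| FTrue | FFalse | FVar of V | FNot of form V
| FAnd of form V & form V | FOr of form V & form V.
Arguments FTrue {V}. Arguments FFalse {V}.

Fixpoint eval (V : Type) (lam : V -> bool) (f : form V) : bool :=
  match f with
  | FTrue => true | FFalse => false | FVar v => lam v
  | FNot g => ~~ eval lam g
  | FAnd g h => eval lam g && eval lam h
  | FOr g h => eval lam g || eval lam h
  end.

Fixpoint fvars (V : Type) (f : form V) : seq V :=
  match f with
  | FTrue | FFalse => [::] | FVar v => [:: v]
  | FNot g => fvars g
  | FAnd g h | FOr g h => fvars g ++ fvars h
  end.

Definition FIff (V : Type) (a b : form V) : form V :=
  FAnd (FOr (FNot a) b) (FOr (FNot b) a).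

Definition bigAnd (V : Type) (s : seq (form V)) : form V := foldr (@FAnd V) FTrue s.
Definition bigOr (V : Type) (s : seq (form V)) : form V := foldr (@FOr V) FFalse s.

Definition lit (V : Type) (l : bool * V) : form V :=
  if l.1 then FVar l.2 else FNot (FVar l.2).

Definition clause (V : Type) := seq (bool * V).
Definition cnf (V : Type) (cls : seq (clause V)) : form V :=
  bigAnd (map (fun c => bigOr (map (@lit V) c)) cls).

Definition sat (V : Type) (f : form V) : Prop := exists lam : V -> bool, eval lam f.

Definition term (V : finType) (lam : V -> bool) (X : {set V}) : form V :=
  bigAnd [seq lit (lam x, x) | x <- enum X].

Definition is_definition (V : finType) (chi : form V) (x : V) (X : {set V})
    (psi : form V) : Prop :=
  all (fun v => v \in X) (fvars psi) /\
  forall lam : V -> bool, eval lam chi -> lam x = eval lam psi.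

Definition has_definition (V : finType) (chi : form V) (x : V) (X : {set V}) : Prop :=
  exists psi, is_definition chi x X psi.

Definition restr (n : nat) (D : {set 'I_n}) (g : 'I_n -> bool) : {ffun 'I_n -> option bool} :=
  [ffun x => if x \in D then Some (g x) else None].

(* DQBF  forall u_1..u_n exists e_1(D_1)..e_m(D_m). phi                *)
(* universal u_x = x : 'I_n, existential e_j = j : 'I_m,               *)
(* phi a CNF over 'I_n + 'I_m (inl = universal, inr = existential)    *)
Definition matrix_sat (n m : nat) (lam : 'I_n + 'I_m -> bool)
    (phi : seq (clause ('I_n + 'I_m))) : bool :=
  all (fun c => has (fun l => lam l.2 == l.1) c) phi.

(* a model: f_j : [D_j] -> bool, where an element of [D_j] is a partial
   assignment with domain D_j *)
Definition dqbf_true (n m : nat) (D : 'I_m -> {set 'I_n})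
    (phi : seq (clause ('I_n + 'I_m))) : Prop :=
  exists f : 'I_m -> {ffun 'I_n -> option bool} -> bool,
    forall sigma : 'I_n -> bool,
      matrix_sat (fun v => match v with
                           | inl x => sigma x
                           | inr j => f j (restr (D j) sigma)
                           end) phi.

(* Variables of the algorithm: universals, existentials, arbiters.    *)
(* The arbiter e_j^sigma, sigma in [D_j], is inr (j, sigma) where      *)
(* sigma is a partial assignment with domain D_j.                      *)
Definition avar (n m : nat) : finType :=
  (('I_n + 'I_m) + ('I_m * {ffun 'I_n -> option bool}))%type.

Section Algorithm.
Variables (n m : nat) (D : 'I_m -> {set 'I_n}) (phi : seq (clause ('I_n + 'I_m))).

Local Notation V := (avar n m).
Definition UV (x : 'I_n) : V := inl (inl x).
Definition EV (j : 'I_m) : V := inl (inr j).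
Definition AV (j : 'I_m) (s : {ffun 'I_n -> option bool}) : V := inr (j, s).

Definition phiF : form V := cnf [seq [seq (l.1, inl l.2 : V) | l <- c] | c <- phi].

Definition chi (phiA : seq (clause V)) : form V := FAnd phiF (cnf phiA).

Inductive state : Type :=
| Phase1 of nat & {set V} & seq (clause V) & form V
    (* loop index i (0-based), A, phi_A, psi_Def *)
| Phase2 of {set V} & seq (clause V) & form V & (V -> bool) & seq (clause V)
    (* A, phi_A, psi_Def, tau, C *)
| Ret of bool.

Definition init : state := Phase1 0 set0 [::] FTrue.

Inductive step : state -> state -> Prop :=
| step_arbiter (i : nat) (Hi : i < m) (A : {set V}) (phiA : seq (clause V))
    (psiDef : form V) (xi : V -> bool) :
    let j := Ordinal Hi in
    let X := (UV @: D j) :|: A in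
    ~ has_definition (chi phiA) (EV j) X ->
    sat (FAnd (chi phiA) (FAnd (term xi X) (FVar (EV j)))) ->
    sat (FAnd (chi phiA) (FAnd (term xi X) (FNot (FVar (EV j))))) ->
    let s := restr (D j) (fun x => xi (UV x)) in
    let negsig := [seq (~~ xi (UV x), UV x) | x <- enum (D j)] in
    step (Phase1 i A phiA psiDef)
         (Phase1 i (AV j s |: A)
            [:: (true, AV j s) :: (false, EV j) :: negsig,
                (false, AV j s) :: (true, EV j) :: negsig & phiA]
            psiDef)
| step_define (i : nat) (Hi : i < m) (A : {set V}) (phiA : seq (clause V))
    (psiDef psi : form V) :
    let j := Ordinal Hi in
    is_definition (chi phiA) (EV j) ((UV @: D j) :|: A) psi ->
    step (Phase1 i A phiA psiDef)
         (Phase1 i.+1 A phiA (FAnd psiDef (FIff (FVar (EV j)) psi)))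
| step_phase2 (A : {set V}) (phiA : seq (clause V)) (psiDef : form V) :
    step (Phase1 m A phiA psiDef) (Phase2 A phiA psiDef (fun _ => true) [::])
| step_true (A : {set V}) (phiA : seq (clause V)) (psiDef : form V)
    (tau : V -> bool) (C : seq (clause V)) :
    ~ sat (FAnd (FNot phiF) (FAnd psiDef (term tau A))) ->
    step (Phase2 A phiA psiDef tau C) (Ret true)
| step_refine (A : {set V}) (phiA : seq (clause V)) (psiDef : form V)
    (tau : V -> bool) (C : seq (clause V)) (sigma : V -> bool)
    (rho : seq (bool * V)) (tau' : V -> bool) :
    eval sigma (FAnd (FNot phiF) (FAnd psiDef (term tau A))) ->
    all (fun l => l \in [seq (tau a, a) | a <- enum A] ++
                        [seq (sigma (UV x), UV x) | x <- enum 'I_n]) rho ->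
    ~ sat (FAnd (chi phiA) (bigAnd (map (@lit V) rho))) ->
    let C' := [seq (~~ l.1, l.2) | l <- rho & l.2 \in A] :: C in
    eval tau' (cnf C') ->
    step (Phase2 A phiA psiDef tau C) (Phase2 A phiA psiDef tau' C')
| step_false (A : {set V}) (phiA : seq (clause V)) (psiDef : form V)
    (tau : V -> bool) (C : seq (clause V)) (sigma : V -> bool)
    (rho : seq (bool * V)) :
    eval sigma (FAnd (FNot phiF) (FAnd psiDef (term tau A))) ->
    all (fun l => l \in [seq (tau a, a) | a <- enum A] ++
                        [seq (sigma (UV x), UV x) | x <- enum 'I_n]) rho ->
    ~ sat (FAnd (chi phiA) (bigAnd (map (@lit V) rho))) ->
    let C' := [seq (~~ l.1, l.2) | l <- rho & l.2 \in A] :: C in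
    ~ sat (cnf C') ->
    step (Phase2 A phiA psiDef tau C) (Ret false).

Inductive reachable : state -> Prop :=
| reach_init : reachable init
| reach_step s s' : reachable s -> step s s' -> reachable s'.

End Algorithm.

From mathcomp Require Import all_boot zify.
From Stdlib Require Import Classical.
Set Implicit Arguments. Unset Strict Implicit. Unset Printing Implicit Defensive.

(* Every run maintains three invariants: phi_A consists of arbiter clauses
   (e_j^s \/ ~e_j \/ ~s), (~e_j^s \/ e_j \/ ~s), both present for each arbiter
   in A; psi_Def is equivalent to the conjunction of the e_j <-> F_j for the
   existentials handled so far, where F_j mentions only D_j and A and holds in
   every model of phi /\ phi_A; and every model (f_j) of the DQBF, read as the
   assignment e_j^s := f_j(s) of the arbiters, satisfies the learnt clauses C.
   Termination: a phase 1 witness xi cannot select an arbiter already in A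
   (its clauses would fix e_j), so A grows; in phase 2 each learnt clause is
   falsified by the current tau, so the set of models of C shrinks.  Phase 2
   never gets stuck because rho := tau /\ sigma|_U is always a valid core:
   fixing the universals and the arbiters fixes every e_j through F_j.
   Answer TRUE is correct because the F_j, with the arbiters read from tau,
   form a model; answer FALSE by the third invariant. *)

Lemma eval_FNot (V : Type) (lam : V -> bool) (a : form V) :
  eval lam (FNot a) = ~~ eval lam a.
Proof. by []. Qed.

Lemma eval_FAnd (V : Type) (lam : V -> bool) (a b : form V) :
  eval lam (FAnd a b) = eval lam a && eval lam b.
Proof. by []. Qed.

Lemma eval_lit (V : Type) (lam : V -> bool) (l : bool * V) :
  eval lam (lit l) = (lam l.2 == l.1).
Proof. by case: l => [[] v] /=; case: (lam v). Qed.

Lemma eval_bigAnd (V : Type) (lam : V -> bool) (s : seq (form V)) :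
  eval lam (bigAnd s) = all (eval lam) s.
Proof. by elim: s => //= f s ->. Qed.

Lemma eval_bigOr (V : Type) (lam : V -> bool) (s : seq (form V)) :
  eval lam (bigOr s) = has (eval lam) s.
Proof. by elim: s => //= f s ->. Qed.

Lemma eval_cnf (V : Type) (lam : V -> bool) (cls : seq (clause V)) :
  eval lam (cnf cls) = all (has (fun l => lam l.2 == l.1)) cls.
Proof.
rewrite /cnf eval_bigAnd all_map; apply: eq_all => c /=.
by rewrite eval_bigOr has_map; apply: eq_has => l; rewrite /= eval_lit.
Qed.

Lemma eval_cnf_cons (V : Type) (lam : V -> bool) (c : clause V) cls :
  eval lam (cnf (c :: cls)) = has (fun l => lam l.2 == l.1) c && eval lam (cnf cls).
Proof. by rewrite !eval_cnf. Qed.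

Lemma eval_cnf_mem (V : eqType) (lam : V -> bool) (cls : seq (clause V)) c :
  eval lam (cnf cls) -> c \in cls -> has (fun l => lam l.2 == l.1) c.
Proof. by rewrite eval_cnf => /allP; apply. Qed.

Lemma eval_FIff (V : Type) (lam : V -> bool) (a b : form V) :
  eval lam (FIff a b) = (eval lam a == eval lam b).
Proof. by rewrite /=; case: (eval lam a); case: (eval lam b). Qed.

Lemma eq_in_eval (V : eqType) (lam lam' : V -> bool) (f : form V) :
  {in fvars f, lam =1 lam'} -> eval lam f = eval lam' f.
Proof.
elim: f => //= [v|g IH|g IHg h IHh|g IHg h IHh] eq_lam.
- by apply: eq_lam; rewrite mem_head.
- by rewrite IH.
- by rewrite IHg ?IHh // => v f_v; apply: eq_lam; rewrite mem_cat f_v ?orbT.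
- by rewrite IHg ?IHh // => v f_v; apply: eq_lam; rewrite mem_cat f_v ?orbT.
Qed.

Lemma termP (V : finType) (lam t : V -> bool) (X : {set V}) :
  reflect {in X, lam =1 t} (eval lam (term t X)).
Proof.
rewrite /term eval_bigAnd all_map.
apply: (iffP allP) => lam_t x X_x.
- by apply/eqP; move: (lam_t x); rewrite mem_enum /= eval_lit; apply.
- by rewrite /= eval_lit /=; apply/eqP; apply: lam_t; rewrite -mem_enum.
Qed.

Lemma fvars_bigAnd (V : eqType) (P : pred V) (s : seq (form V)) :
  all (fun f => all P (fvars f)) s -> all P (fvars (bigAnd s)).
Proof. by elim: s => //= f s IH /andP[Pf Ps]; rewrite all_cat Pf IH. Qed.

Lemma fvars_bigOr (V : eqType) (P : pred V) (s : seq (form V)) :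
  all (fun f => all P (fvars f)) s -> all P (fvars (bigOr s)).
Proof. by elim: s => //= f s IH /andP[Pf Ps]; rewrite all_cat Pf IH. Qed.

Lemma fvars_term (V : finType) (t : V -> bool) (X : {set V}) :
  all (fun v => v \in X) (fvars (term t X)).
Proof.
apply: fvars_bigAnd; rewrite all_map; apply/allP => x X_x /=.
by rewrite /lit /=; case: (t x) => /=; rewrite andbT -mem_enum.
Qed.

(* Otherwise the disjunction of the terms of the models of ch in which e
   holds would be a definition of e. *)
Lemma undefinable_witness (V : finType) (ch : form V) (e : V) (X : {set V}) :
  ~ has_definition ch e X ->
  exists xi : V -> bool, sat (FAnd ch (FAnd (term xi X) (FVar e))) /\
                         sat (FAnd ch (FAnd (term xi X) (FNot (FVar e)))).
Proof.
move=> undef; apply: NNPP => no_witness; apply: undef.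
pose models := [seq f : {ffun V -> bool} <- enum {ffun V -> bool} |
                eval (fun v => f v) ch && f e].
exists (bigOr [seq term (fun v => f v) X | f : {ffun V -> bool} <- models]); split.
  by apply: fvars_bigOr; rewrite all_map; apply/allP => f _; apply: fvars_term.
move=> lam ch_lam; rewrite eval_bigOr has_map.
have lamE : eval [ffun v => lam v] ch = eval lam ch.
  by apply: eq_in_eval => v _; rewrite ffunE.
case lam_e: (lam e).
- apply/esym/hasP; exists [ffun v => lam v].
    by rewrite mem_filter mem_enum andbT ffunE lam_e lamE ch_lam.
  by apply/termP => x _ /=; rewrite ffunE.
- apply/esym/negbTE/hasP => -[f]; rewrite mem_filter => /andP[/andP[ch_f f_e] _] /= t_f.
  apply: no_witness; exists f; split.
    by exists f; rewrite /= ch_f f_e andbT; apply/termP.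
  by exists lam; rewrite /= ch_lam t_f lam_e.
Qed.

Section Correctness.
Variables (n m : nat) (D : 'I_m -> {set 'I_n}) (phi : seq (clause ('I_n + 'I_m))).
Local Notation V := (avar n m).

Definition negsig (j : 'I_m) (g : 'I_n -> bool) : clause V :=
  [seq (~~ g x, UV m x) | x <- enum (D j)].

Definition arbiter_clause (b : bool) (j : 'I_m) (g : 'I_n -> bool) : clause V :=
  (b, AV j (restr (D j) g)) :: (~~ b, EV n j) :: negsig j g.

Definition is_arbiter (v : V) : bool := if v is inr _ then true else false.

Definition arbiter_inv (A : {set V}) (phiA : seq (clause V)) : Prop :=
  [/\ {in A, forall v, is_arbiter v},
      (forall j s, AV j s \in A -> exists g, [/\ s = restr (D j) g,
         arbiter_clause true j g \in phiA & arbiter_clause false j g \in phiA]) &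
      (forall c, c \in phiA -> exists b j g, c = arbiter_clause b j g)].

Definition definition_inv (i : nat) (A : {set V}) (phiA : seq (clause V))
    (psiDef : form V) : Prop :=
  exists F : 'I_m -> form V,
   [/\ (forall j, all (fun v => v \in (UV m @: D j) :|: A) (fvars (F j))),
       (forall lam, eval lam psiDef =
          [forall j : 'I_m, (j < i) ==> (lam (EV n j) == eval lam (F j))]) &
       (forall j : 'I_m, j < i -> forall lam, eval lam (chi phi phiA) ->
          lam (EV n j) = eval lam (F j))].

Definition is_model (f : 'I_m -> {ffun 'I_n -> option bool} -> bool) : Prop :=
  forall sigma : 'I_n -> bool,
    matrix_sat (fun v => match v with
                         | inl x => sigma x
                         | inr j => f j (restr (D j) sigma) end) phi.

Definition arbiter_assignment (f : 'I_m -> {ffun 'I_n -> option bool} -> bool) :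
    V -> bool :=
  fun v => if v is inr (j, s) then f j s else false.

Definition model_assignment (f : 'I_m -> {ffun 'I_n -> option bool} -> bool)
    (u : 'I_n -> bool) : V -> bool :=
  fun v => match v with
           | inl (inl x) => u x
           | inl (inr j) => f j (restr (D j) u)
           | inr (j, s) => f j s
           end.

Definition state_inv (s : state n m) : Prop :=
  match s with
  | Phase1 i A phiA psiDef => [/\ i <= m, arbiter_inv A phiA & definition_inv i A phiA psiDef]
  | Phase2 A phiA psiDef tau C =>
      [/\ arbiter_inv A phiA, definition_inv m A phiA psiDef, eval tau (cnf C) &
          (forall f, is_model f -> eval (arbiter_assignment f) (cnf C))]
  | Ret _ => True
  end.

Lemma eval_chi (lam : V -> bool) phiA :
  eval lam (chi phi phiA) = eval lam (phiF phi) && eval lam (cnf phiA).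
Proof. by []. Qed.

Lemma eval_phiF (lam : V -> bool) :
  eval lam (phiF phi) = matrix_sat (fun v => lam (inl v)) phi.
Proof.
rewrite /phiF eval_cnf all_map /matrix_sat; apply: eq_all => c /=.
by rewrite has_map; apply: eq_has => l.
Qed.

Lemma eq_matrix_sat (l1 l2 : 'I_n + 'I_m -> bool) :
  l1 =1 l2 -> matrix_sat l1 phi = matrix_sat l2 phi.
Proof.
by move=> eq_l; apply: eq_all => c; apply: eq_has => l; rewrite eq_l.
Qed.

Lemma chi_cons (lam : V -> bool) c phiA :
  eval lam (chi phi (c :: phiA)) -> eval lam (chi phi phiA).
Proof. by rewrite !eval_chi eval_cnf_cons => /andP[-> /andP[_ ->]]. Qed.

Lemma arbiter_clause_false (lam : V -> bool) b j g :
  lam (AV j (restr (D j) g)) = ~~ b -> lam (EV n j) = b ->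
  {in D j, forall x, lam (UV m x) = g x} ->
  ~~ has (fun l => lam l.2 == l.1) (arbiter_clause b j g).
Proof.
move=> lam_a lam_e lam_u; rewrite /arbiter_clause /= lam_a lam_e.
have -> : has (fun l => lam l.2 == l.1) (negsig j g) = false.
  apply/negbTE/hasPn => _ /mapP[x Dx ->] /=.
  by rewrite mem_enum in Dx; rewrite lam_u //; case: (g x).
by case: b {lam_a lam_e}.
Qed.

Lemma model_assignment_phiF f u : is_model f -> eval (model_assignment f u) (phiF phi).
Proof. by move=> f_model; rewrite eval_phiF; apply: f_model. Qed.

Lemma model_assignment_arbiter_clause f u b j g :
  has (fun l => model_assignment f u l.2 == l.1) (arbiter_clause b j g).
Proof.
have [u_eq_g | /forall_inPn[x Dx u_neq_g]] := boolP [forall x in D j, u x == g x].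
  rewrite /arbiter_clause /=.
  have -> : restr (D j) u = restr (D j) g.
    apply/ffunP => x; rewrite !ffunE; case: ifP => // Dx.
    by move/forall_inP: u_eq_g => /(_ x Dx)/eqP ->.
  by case: b; case: (f j _).
apply/hasP; exists (~~ g x, UV m x).
  by rewrite !inE map_f ?orbT ?mem_enum.
by move: u_neq_g => /=; case: (u x); case: (g x).
Qed.

(* If e_j^s were in A, phi_A would force e_j to the value of e_j^s on every
   model agreeing with xi on D_j and A, so e_j could not take both values. *)
Lemma fresh_arbiter A phiA (j : 'I_m) (xi : V -> bool) :
  arbiter_inv A phiA ->
  sat (FAnd (chi phi phiA) (FAnd (term xi ((UV m @: D j) :|: A)) (FVar (EV n j)))) ->
  sat (FAnd (chi phi phiA) (FAnd (term xi ((UV m @: D j) :|: A)) (FNot (FVar (EV n j))))) ->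
  AV j (restr (D j) (fun x => xi (UV m x))) \notin A.
Proof.
move=> [_ A_arb _] [l1 /= /andP[/andP[_ phiA_l1] /andP[/termP l1_xi l1_e]]].
move=> [l2 /= /andP[/andP[_ phiA_l2] /andP[/termP l2_xi l2_e]]].
apply/negP => A_a; have [g [sE cl1 cl2]] := A_arb _ _ A_a.
have xi_g : {in D j, forall x, xi (UV m x) = g x}.
  by move=> x Dx; move/ffunP: sE => /(_ x); rewrite !ffunE Dx => -[].
have X_a : AV j (restr (D j) g) \in (UV m @: D j) :|: A by rewrite -sE inE A_a orbT.
have X_u x : x \in D j -> UV m x \in (UV m @: D j) :|: A.
  by move=> Dx; rewrite inE imset_f.
case xi_a: (xi (AV j (restr (D j) g))).
- have := eval_cnf_mem phiA_l2 cl2; apply/negP; apply: arbiter_clause_false.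
  + by rewrite l2_xi // xi_a.
  + exact/negbTE.
  + by move=> x Dx; rewrite l2_xi ?xi_g ?X_u.
- have := eval_cnf_mem phiA_l1 cl1; apply/negP; apply: arbiter_clause_false.
  + by rewrite l1_xi // xi_a.
  + by [].
  + by move=> x Dx; rewrite l1_xi ?xi_g ?X_u.
Qed.

Lemma arbiter_inv_add A phiA j g :
  arbiter_inv A phiA ->
  arbiter_inv (AV j (restr (D j) g) |: A)
    [:: arbiter_clause true j g, arbiter_clause false j g & phiA].
Proof.
move=> [A_arb A_cl phiA_cl]; split.
- by move=> v; rewrite in_setU1 => /orP[/eqP -> //|]; apply: A_arb.
- move=> j' s; rewrite in_setU1 => /orP[/eqP [-> ->]|A_a].
    by exists g; split; rewrite ?mem_head // mem_behead ?mem_head.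
  have [g' [sE cl1 cl2]] := A_cl _ _ A_a.
  by exists g'; split => //; do 2 apply: mem_behead.
- move=> c; rewrite !in_cons => /orP[/eqP ->|/orP[/eqP ->|/phiA_cl //]].
  + by exists true, j, g.
  + by exists false, j, g.
Qed.

Lemma definition_inv_add i A phiA psiDef a c c' :
  definition_inv i A phiA psiDef -> definition_inv i (a |: A) [:: c, c' & phiA] psiDef.
Proof.
move=> [F [F_vars psiDefE F_def]]; exists F; split => //.
- move=> k; apply: sub_all (F_vars k) => v.
  by rewrite !inE => /orP[->|->]; rewrite ?orbT.
- by move=> k lt_ki lam /chi_cons/chi_cons; apply: F_def.
Qed.

Lemma forall_ord_ltS (i : nat) (Hi : i < m) (P : pred 'I_m) :
  [forall k : 'I_m, (k < i.+1) ==> P k] =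
  [forall k : 'I_m, (k < i) ==> P k] && P (Ordinal Hi).
Proof.
apply/forallP/andP => [P_le | [/forallP P_lt P_i] k].
  split; last by have := P_le (Ordinal Hi); rewrite /= ltnSn.
  by apply/forallP => k; apply/implyP => lt_ki; have := P_le k; rewrite ltnW.
apply/implyP; rewrite ltnS leq_eqVlt => /orP[/eqP ki|lt_ki].
  by have -> : k = Ordinal Hi by apply: val_inj.
by have := P_lt k; rewrite lt_ki.
Qed.

Lemma definition_inv_define i (Hi : i < m) A phiA psiDef psi :
  let j := Ordinal Hi in
  definition_inv i A phiA psiDef ->
  is_definition (chi phi phiA) (EV n j) ((UV m @: D j) :|: A) psi ->
  definition_inv i.+1 A phiA (FAnd psiDef (FIff (FVar (EV n j)) psi)).
Proof.
move=> j [F [F_vars psiDefE F_def]] [psi_vars psi_def].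
pose F' k := if k == j then psi else F k.
have F'_j : F' j = psi by rewrite /F' eqxx.
have F'_lt (k : 'I_m) : k < i -> F' k = F k.
  by rewrite /F'; case: eqP => // -> /=; rewrite ltnn.
exists F'; split.
- by move=> k; rewrite /F'; case: eqP => [->|].
- move=> lam; rewrite forall_ord_ltS F'_j.
  rewrite -[LHS]/(eval lam psiDef && eval lam (FIff (FVar (EV n j)) psi)).
  rewrite eval_FIff psiDefE; congr (_ && _); apply: eq_forallb => k.
  by case: ltnP => //= /F'_lt ->.
- move=> k; rewrite ltnS leq_eqVlt => /orP[/eqP ki|lt_ki].
    have -> : k = j by apply: val_inj.
    by rewrite F'_j.
  by rewrite F'_lt //; apply: F_def.
Qed.

Lemma state_inv_init : state_inv (init n m).
Proof.
split=> //; first by split=> // [v|j s]; rewrite in_set0.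
exists (fun _ => FTrue); split=> // lam.
by apply/esym/forallP.
Qed.

(* Otherwise f agrees with rho on A, and the assignment induced by f and the
   universal part of sigma satisfies phi /\ phi_A /\ rho. *)
Lemma learnt_clause_model A phiA (tau sigma : V -> bool) (rho : seq (bool * V)) f :
  arbiter_inv A phiA -> is_model f ->
  all (fun l => l \in [seq (tau a, a) | a <- enum A] ++
                      [seq (sigma (UV m x), UV m x) | x <- enum 'I_n]) rho ->
  ~ sat (FAnd (chi phi phiA) (bigAnd (map (@lit V) rho))) ->
  has (fun l => arbiter_assignment f l.2 == l.1) [seq (~~ l.1, l.2) | l <- rho & l.2 \in A].
Proof.
move=> [A_arb _ phiA_cl] f_model /allP rho_lits rho_unsat.
apply: contraT => /hasPn no_lit; case: rho_unsat.
have f_rho l : l \in rho -> l.2 \in A -> arbiter_assignment f l.2 = l.1.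
  move=> rho_l A_l; have /= := no_lit (~~ l.1, l.2).
  rewrite map_f ?mem_filter ?A_l // => /(_ isT).
  by case: (l.1); case: (arbiter_assignment f l.2).
pose lam := model_assignment f (fun x => sigma (UV m x)).
exists lam; rewrite eval_FAnd; apply/andP; split.
  rewrite eval_chi model_assignment_phiF // eval_cnf.
  apply/allP => c /phiA_cl[b [j [g ->]]]; exact: model_assignment_arbiter_clause.
rewrite eval_bigAnd all_map; apply/allP => l rho_l /=; rewrite eval_lit.
have := rho_lits l rho_l; rewrite mem_cat => /orP[/mapP[a A_a El]|/mapP[x _ ->//]].
rewrite mem_enum in A_a; have := f_rho l rho_l; rewrite El /= => /(_ A_a) <-.
by have := A_arb a A_a; case: a {A_a El}.
Qed.

Lemma state_inv_step s s' : state_inv s -> step D phi s s' -> state_inv s'.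
Proof.
move=> inv_s st; case: s s' / st inv_s.
- move=> i Hi A phiA psiDef xi j X _ _ _ s ns [le_im A_inv A_def]; split=> //.
    exact: (arbiter_inv_add _ (fun x => xi (UV m x)) A_inv).
  exact: definition_inv_add.
- move=> i Hi A phiA psiDef psi j psi_def [le_im A_inv A_def]; split=> //.
  exact: definition_inv_define.
- by move=> A phiA psiDef [].
- by [].
- move=> A phiA psiDef tau C sigma rho tau' _ rho_lits rho_unsat C' tau'_C'.
  move=> [A_inv A_def tau_C models_C]; split=> // f f_model.
  rewrite eval_cnf_cons models_C // andbT.
  exact: learnt_clause_model rho_lits rho_unsat.
- by [].
Qed.

Lemma state_inv_reachable s : reachable D phi s -> state_inv s.
Proof.
elim=> [|s1 s2 _ inv_s1 st]; first exact: state_inv_init.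
exact: state_inv_step inv_s1 st.
Qed.

Lemma definition_inv_agree A phiA psiDef (lam sigma : V -> bool) :
  definition_inv m A phiA psiDef -> eval sigma psiDef -> eval lam (chi phi phiA) ->
  {in A, lam =1 sigma} -> (forall x, lam (UV m x) = sigma (UV m x)) ->
  forall j, lam (EV n j) = sigma (EV n j).
Proof.
move=> [F [F_vars psiDefE F_def]] sigma_def lam_chi lam_A lam_U j.
rewrite (F_def j (ltn_ord j) lam lam_chi).
move: sigma_def; rewrite psiDefE => /forallP/(_ j); rewrite ltn_ord => /eqP ->.
apply: eq_in_eval => v /(allP (F_vars j)).
by rewrite in_setU => /orP[/imsetP[x _ ->]|/lam_A].
Qed.

Lemma phase2_core A phiA psiDef (tau sigma : V -> bool) :
  definition_inv m A phiA psiDef ->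
  eval sigma (FAnd (FNot (phiF phi)) (FAnd psiDef (term tau A))) ->
  ~ sat (FAnd (chi phi phiA) (bigAnd (map (@lit V)
      ([seq (tau a, a) | a <- enum A] ++ [seq (sigma (UV m x), UV m x) | x <- enum 'I_n])))).
Proof.
move=> A_def; rewrite !eval_FAnd eval_FNot => /and3P[sigma_phi sigma_def /termP sigma_tau].
move=> [lam]; rewrite eval_FAnd eval_bigAnd all_map => /andP[lam_chi /allP lam_rho].
have lam_lit l : l \in [seq (tau a, a) | a <- enum A] ++
                       [seq (sigma (UV m x), UV m x) | x <- enum 'I_n] -> lam l.2 = l.1.
  by move=> /lam_rho /=; rewrite eval_lit => /eqP.
have lam_A : {in A, lam =1 sigma}.
  by move=> a A_a; rewrite sigma_tau // (lam_lit (tau a, a)) // mem_cat map_f ?mem_enum.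
have lam_U x : lam (UV m x) = sigma (UV m x).
  by rewrite (lam_lit (sigma (UV m x), UV m x)) // mem_cat map_f ?orbT ?mem_enum.
have lam_E := definition_inv_agree A_def sigma_def lam_chi lam_A lam_U.
move: lam_chi sigma_phi; rewrite eval_chi !eval_phiF => /andP[lam_phi _].
rewrite (@eq_matrix_sat _ (fun v => lam (inl v))) ?lam_phi // => -[x|j].
  exact/esym/lam_U.
exact/esym/lam_E.
Qed.

(* The model reads the definitions F_j with the universals from the argument of
   f_j and the arbiters from tau; these F_j mention no other variables. *)
Lemma phase2_true_model A phiA psiDef (tau : V -> bool) :
  arbiter_inv A phiA -> definition_inv m A phiA psiDef ->
  ~ sat (FAnd (FNot (phiF phi)) (FAnd psiDef (term tau A))) ->
  dqbf_true D phi.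
Proof.
move=> [A_arb _ _] [F [F_vars psiDefE _]] no_cex.
pose lamS (s : {ffun 'I_n -> option bool}) : V -> bool := fun v =>
  match v with
  | inl (inl x) => s x == Some true
  | inl (inr _) => false
  | inr _ => tau v
  end.
pose f j s := eval (lamS s) (F j).
exists f => sigma.
pose lam : V -> bool := fun v => match v with
  | inl (inl x) => sigma x
  | inl (inr j) => f j (restr (D j) sigma)
  | inr _ => tau v
  end.
have lam_def : eval lam psiDef.
  rewrite psiDefE; apply/forallP => j; apply/implyP => _; apply/eqP.
  apply: eq_in_eval => v /(allP (F_vars j)).
  rewrite in_setU => /orP[/imsetP[x Dx ->]|/A_arb].
    by rewrite /= ffunE Dx; case: (sigma x).
  by case: v.
have lam_tau : eval lam (term tau A) by apply/termP => a /A_arb; case: a.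
suff : eval lam (phiF phi) by rewrite eval_phiF.
apply: contraT => lam_cex; case: no_cex; exists lam.
by rewrite !eval_FAnd eval_FNot lam_cex lam_def lam_tau.
Qed.

Lemma state_inv_progress s :
  state_inv s -> (exists b, s = Ret n m b) \/ exists s', step D phi s s'.
Proof.
case: s => [i A phiA psiDef|A phiA psiDef tau C|b]; last by left; exists b.
- move=> [le_im _ _]; right; have [lt_im|] := ltnP i m.
    pose j := Ordinal lt_im; pose X := (UV m @: D j) :|: A.
    have [[psi psi_def]|undef] := classic (has_definition (chi phi phiA) (EV n j) X).
      by eexists; apply: step_define psi_def.
    have [xi [sat_e sat_ne]] := undefinable_witness undef.
    by eexists; apply: step_arbiter undef sat_e sat_ne.
  move=> le_mi; have -> : i = m by apply/eqP; rewrite eqn_leq le_im le_mi.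
  by eexists; apply: step_phase2.
- move=> [_ A_def _ _]; right.
  have [[sigma cex]|no_cex] :=
    classic (sat (FAnd (FNot (phiF phi)) (FAnd psiDef (term tau A)))); last first.
    by eexists; apply: step_true.
  pose rho := [seq (tau a, a) | a <- enum A] ++
              [seq (sigma (UV m x), UV m x) | x <- enum 'I_n].
  have rho_lits : all (fun l => l \in rho) rho by apply/allP.
  have rho_unsat := phase2_core A_def cex.
  pose C' := [seq (~~ l.1, l.2) | l <- rho & l.2 \in A] :: C.
  have [[tau' tau'_C']|unsat_C'] := classic (sat (cnf C')).
    by eexists; apply: step_refine cex rho_lits rho_unsat tau'_C'.
  by eexists; apply: step_false cex rho_lits rho_unsat unsat_C'.
Qed.

Definition cnf_models (C : seq (clause V)) : {set {set V}} :=
  [set t : {set V} | eval (fun v => v \in t) (cnf C)].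

(* Phase 1 is ordered lexicographically by (m - i, #|V| - #|A|); its values
   all exceed those of phase 2, which are bounded by #|{set V}|.+1. *)
Definition potential (s : state n m) : nat :=
  match s with
  | Phase1 i A _ _ => #|{set V}|.+2 + (m - i) * #|V|.+1 + (#|V|.+1 - #|A|)
  | Phase2 _ _ _ _ C => #|cnf_models C|.+1
  | Ret _ => 0
  end.

Lemma learnt_clause_shrinks (A : {set V}) (tau sigma : V -> bool) rho C :
  {in A, forall v, is_arbiter v} ->
  all (fun l => l \in [seq (tau a, a) | a <- enum A] ++
                      [seq (sigma (UV m x), UV m x) | x <- enum 'I_n]) rho ->
  eval tau (cnf C) ->
  cnf_models ([seq (~~ l.1, l.2) | l <- rho & l.2 \in A] :: C) \proper cnf_models C.
Proof.
move=> A_arb /allP rho_lits tau_C; apply/properP; split.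
  by apply/subsetP => t; rewrite !inE eval_cnf_cons => /andP[].
have tauE f : eval (fun v => v \in [set v | tau v]) f = eval tau f.
  by apply: eq_in_eval => v _; rewrite inE.
exists [set v | tau v]; rewrite !inE tauE // eval_cnf_cons negb_and; apply/orP; left.
apply/hasPn => l' /mapP[l]; rewrite mem_filter => /andP[A_l rho_l] -> /=.
have := rho_lits l rho_l; rewrite mem_cat => /orP[/mapP[a _ lE]|/mapP[x _ lE]].
  by rewrite lE /=; case: (tau a).
by move: A_l; rewrite lE => /A_arb.
Qed.

Lemma potential_step s s' : state_inv s -> step D phi s s' -> potential s' < potential s.
Proof.
move=> inv_s st; case: s s' / st inv_s => //.
- move=> i Hi A phiA psiDef xi j X _ sat_e sat_ne s ns [_ A_inv _].
  rewrite /potential cardsU1 (fresh_arbiter A_inv sat_e sat_ne).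
  have := max_card A; lia.
- move=> i Hi A phiA psiDef psi j _ _.
  rewrite /potential ltn_add2r ltn_add2l ltn_mul2r /=; lia.
- move=> A phiA psiDef _; rewrite /potential -addnA.
  by apply: leq_trans (leq_addr _ _); rewrite !ltnS max_card.
- move=> A phiA psiDef tau C sigma rho tau' _ rho_lits _ C' _ [[A_arb _ _] _ tau_C _].
  by rewrite /potential ltnS proper_card // (learnt_clause_shrinks A_arb rho_lits tau_C).
Qed.

Lemma reachable_acc s : reachable D phi s -> Acc (fun s' s => step D phi s s') s.
Proof.
move=> reach_s; have [k] : exists k, potential s < k by exists (potential s).+1.
elim: k s reach_s => [//|k IH] s reach_s lt_sk; constructor => s' st.
apply: IH; first exact: reach_step reach_s st.
by have := potential_step (state_inv_reachable reach_s) st; lia.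
Qed.

Lemma state_inv_answer s b :
  state_inv s -> step D phi s (Ret n m b) -> (b = true <-> dqbf_true D phi).
Proof.
move=> inv_s; move Er : (Ret n m b) => r st; case: s r / st Er inv_s => //.
- move=> A phiA psiDef tau C no_cex [->] [A_inv A_def _ _].
  by split=> // _; apply: phase2_true_model A_inv A_def no_cex.
- move=> A phiA psiDef tau C sigma rho _ rho_lits rho_unsat C' unsat_C' [->].
  move=> [A_inv _ _ models_C]; split=> // -[f f_model]; case: unsat_C'.
  exists (arbiter_assignment f); rewrite eval_cnf_cons models_C // andbT.
  exact: learnt_clause_model A_inv f_model rho_lits rho_unsat.
Qed.

End Correctness.

Theorem corollary1 (n m : nat) (D : 'I_m -> {set 'I_n})
    (phi : seq (clause ('I_n + 'I_m))) :
  (* termination: no infinite run from the initial state *)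
  Acc (fun s' s => step D phi s s') (init n m) /\
  (* no run gets stuck: every reachable non-final state has an admissible step *)
  (forall s, reachable D phi s ->
     (exists b, s = Ret n m b) \/ exists s', step D phi s s') /\
  (* correctness of every returned answer *)
  (forall b, reachable D phi (Ret n m b) -> (b = true <-> dqbf_true D phi)).
Proof.
split; first exact/reachable_acc/reach_init.
split=> [s /state_inv_reachable/state_inv_progress //|b].
move Er : (Ret n m b) => r reach_r; case: r / reach_r Er => // s r reach_s st Er.
by apply: state_inv_answer (state_inv_reachable reach_s) _; rewrite Er.
Qed.
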